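(* Let $D=(E,\mathcal{F})$ be a proper set system, $a,b\in E$ with $a\neq b$, and let $A\subseteq E$ satisfy $|A\cap\{a,b\}|=0$ or $|A\cap\{a,b\}|=2$. Then $\omega(D* A)=\omega(\widetilde{D}_{ab}* A)$.
   Context: A set system $D=(E,\mathcal{F})$ is a finite set $E$ together with a collection $\mathcal{F}$ of subsets of $E$ (feasible sets); proper means $\mathcal{F}\neq\emptyset$. $\triangle$ denotes symmetric difference. For $A\subseteq E$, the twist is $D*A=(E,\{A\triangle X: X\in\mathcal{F}\})$. The width $\omega(D)$ of a proper set system is the size of a largest feasible set minus the size of a smallest feasible set. For distinct $a,b\in E$, the result of handle sliding of $a$ over $b$ is $\widetilde{D}_{ab}=(E,\widetilde{\mathcal{F}}_{ab})$ with $\widetilde{\mathcal{F}}_{ab}=\mathcal{F}\triangle\{F\cup\{a\}\mid F\cup\{b\}\in\mathcal{F},\ F\subseteq E\setminus\{a,b\}\}$. *)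

(* A set system D = (E, F) with E a finite type and
   F : {set {set E}} its family of feasible sets. *)
From mathcomp Require Import all_boot.
Set Implicit Arguments. Unset Strict Implicit. Unset Printing Implicit Defensive.

Section SetSystems.
Variable E : finType.

Definition symdiff (X Y : {set E}) : {set E} := (X :\: Y) :|: (Y :\: X).

Definition proper_ss (F : {set {set E}}) : bool := F != set0.

Definition twist (F : {set {set E}}) (A : {set E}) : {set {set E}} :=
  [set symdiff A X | X in F].

Definition fsymdiff (F G : {set {set E}}) : {set {set E}} := (F :\: G) :|: (G :\: F).

Definition handle_slide (F : {set {set E}}) (a b : E) : {set {set E}} :=
  fsymdiff F [set X :|: [set a] | X : {set E} &
                 (X \subset ~: [set a; b]) && (X :|: [set b] \in F)].

(* width: size of a largest feasible set minus size of a smallest one.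
   (Meaningful for proper set systems; the identity #|E| of the min is
   an upper bound for all sizes, so it is harmless when F is nonempty.) *)
Definition width (F : {set {set E}}) : nat :=
  (\max_(X in F) #|X|) - \big[minn/#|E|]_(X in F) #|X|.

End SetSystems.

(* F and its handle slide differ only in sets X + a (with a, b not in X)
   for which X + b is feasible, and X + b stays feasible after the slide.
   When A contains both or neither of a and b, the transposition of a and b
   fixes A and maps A △ (X + a) onto A △ (X + b), so both sets have the same
   size. Hence the two twisted systems realise the same set of sizes, and the
   width depends on nothing else. *)
From HB Require Import structures.
From mathcomp Require Import all_boot fingroup perm.
Set Implicit Arguments. Unset Strict Implicit. Unset Printing Implicit Defensive.

(* minn has no unit in nat; the AC bigop lemmas only need a semigroup law. *)
HB.instance Definition _ := SemiGroup.isComLaw.Build nat minn minnA minnC.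

Lemma eq_big_idem_AC (R : Type) (op : SemiGroup.com_law R) (x : R)
    (I : eqType) (r1 r2 : seq I) (F : I -> R) :
  idempotent_op op -> r1 =i r2 ->
  \big[op/x]_(i <- r1) F i = \big[op/x]_(i <- r2) F i.
Proof.
move=> opxx eq_r; rewrite -big_undup // -[RHS]big_undup //.
by apply/perm_big/uniq_perm; rewrite ?undup_uniq // => i; rewrite !mem_undup.
Qed.

Section SetSystemLemmas.
Variable E : finType.
Implicit Types (A X Y : {set E}) (P Q : {set {set E}}).

Definition sizes P : seq nat := [seq #|X| | X in P].

Lemma width_eq_sizes P Q : sizes P =i sizes Q -> width P = width Q.
Proof.
move=> eqPQ; rewrite /width -!(big_image _ _ (fun X => #|X|) _ id).
by rewrite (eq_big_idem_AC _ _ maxnn eqPQ) (eq_big_idem_AC _ _ minnn eqPQ).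
Qed.

Lemma in_fsymdiff P Q X : (X \in fsymdiff P Q) = (X \in P) (+) (X \in Q).
Proof. by rewrite !inE; case: (X \in P); case: (X \in Q). Qed.

Lemma preimset_symdiff (f : E -> E) A X :
  f @^-1: symdiff A X = symdiff (f @^-1: A) (f @^-1: X).
Proof. by rewrite /symdiff preimsetU !preimsetD. Qed.

Lemma preimset_tperm (x y : E) A : (x \in A) = (y \in A) -> tperm x y @^-1: A = A.
Proof. by move=> xyA; apply/setP => z; rewrite inE; case: tpermP => [->|->|]. Qed.

Lemma preimset_tperm_set1 (x y : E) : tperm x y @^-1: [set y] = [set x].
Proof. by apply/setP => z; rewrite !inE -{2}(tpermL x y) (inj_eq perm_inj). Qed.

Lemma preimset_tperm_setU1 (x y : E) X : x \notin X -> y \notin X ->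
  tperm x y @^-1: (X :|: [set y]) = X :|: [set x].
Proof.
move=> xX yX; rewrite preimsetU preimset_tperm_set1 preimset_tperm //.
by rewrite (negbTE xX) (negbTE yX).
Qed.

Lemma card_symdiff_setU1_tperm (x y : E) A X :
  (x \in A) = (y \in A) -> x \notin X -> y \notin X ->
  #|symdiff A (X :|: [set x])| = #|symdiff A (X :|: [set y])|.
Proof.
move=> xyA xX yX; rewrite -[in RHS](card_preimset _ (@perm_inj _ (tperm x y))).
by rewrite preimset_symdiff preimset_tperm // preimset_tperm_setU1.
Qed.

Lemma card_setI_set2 (a b : E) A : a != b ->
  #|A :&: [set a; b]| = (a \in A) + (b \in A).
Proof.
move=> ab; have uniq_ab : uniq [:: a; b] by rewrite /= inE ab.
have /eq_card-> : A :&: [set a; b] =i [seq x <- [:: a; b] | x \in A].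
  by move=> x; rewrite mem_filter !inE.
by rewrite (card_uniqP _) ?filter_uniq // size_filter /= addn0.
Qed.

End SetSystemLemmas.

Section HandleSlide.
Variables (E : finType) (F : {set {set E}}) (a b : E).
Hypothesis neq_ab : a != b.

Definition slide_delta : {set {set E}} :=
  [set X :|: [set a] | X : {set E} & (X \subset ~: [set a; b]) && (X :|: [set b] \in F)].

Lemma handle_slideE : handle_slide F a b = fsymdiff F slide_delta.
Proof. by []. Qed.

Lemma in_slide_delta_a Y : Y \in slide_delta -> a \in Y.
Proof. by case/imsetP => X _ ->; rewrite !inE eqxx orbT. Qed.

Lemma in_handle_slide_notin (Y : {set E}) :
  a \notin Y -> (Y \in handle_slide F a b) = (Y \in F).
Proof.
move=> aY; rewrite handle_slideE in_fsymdiff.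
by have [/in_slide_delta_a|] := boolP (Y \in slide_delta); rewrite ?(negbTE aY) ?addbF.
Qed.

Variable A : {set E}.
Hypothesis eq_abA : (a \in A) = (b \in A).

Lemma sizes_twist_sub (P Q : {set {set E}}) :
  (forall Y, Y \in P -> Y \notin Q -> Y \in slide_delta) ->
  (forall Y, Y \in F -> a \notin Y -> Y \in Q) ->
  {subset sizes (twist P A) <= sizes (twist Q A)}.
Proof.
move=> PQ FQ _ /imageP[_ /imsetP[Y PY ->] ->].
have [QY | nQY] := boolP (Y \in Q).
  by apply/imageP; exists (symdiff A Y) => //; apply: imset_f.
case/imsetP: (PQ Y PY nQY) => X; rewrite inE => /andP[sX FXb] ->.
have [aX bX] : a \notin X /\ b \notin X.
  by split; apply/negP => /(subsetP sX); rewrite !inE eqxx ?orbT.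
apply/imageP; exists (symdiff A (X :|: [set b])).
  by apply/imset_f/FQ; rewrite // !inE (negbTE aX) (negbTE neq_ab).
exact: card_symdiff_setU1_tperm.
Qed.

End HandleSlide.

Theorem proposition3p2 (E : finType) (F : {set {set E}}) (a b : E) (A : {set E}) :
  proper_ss F -> a != b ->
  (#|A :&: [set a; b]| = 0 \/ #|A :&: [set a; b]| = 2) ->
  width (twist F A) = width (twist (handle_slide F a b) A).
Proof.
move=> _ neq_ab; rewrite card_setI_set2 // => cardAab.
have eq_abA : (a \in A) = (b \in A).
  by case: (a \in A) (b \in A) cardAab => [] [] [].
apply: width_eq_sizes => n; apply/idP/idP.
all: apply: (sizes_twist_sub (F := F) neq_ab eq_abA) => // Y.
- by rewrite handle_slideE in_fsymdiff => ->; rewrite negbK.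
- by move=> FY aY; rewrite in_handle_slide_notin.
- by rewrite handle_slideE in_fsymdiff => + /negbTE FY; rewrite FY.
Qed.
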